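(* Let $H_1\in\mathbb{F}_2^{r_1\times n_1}$ and $H_2\in\mathbb{F}_2^{r_2\times n_2}$ be arbitrary binary matrices (rows may be linearly dependent), and let $\mathcal{Q}$ be the hypergraph product code of $H_1$ and $H_2$ on $n=n_1n_2+r_1r_2$ qubits, with $X$-check matrix $H_X=\big(H_1\otimes I_{n_2}\ \big|\ I_{r_1}\otimes H_2^T\big)$ and $Z$-check matrix $H_Z=\big(I_{n_1}\otimes H_2\ \big|\ H_1^T\otimes I_{r_2}\big)$. Let $d$ be the distance of $\mathcal{Q}$. Suppose every row of $H_Z$ and of $H_X$ is measured with its own ancilla qubit by a sequence of two-qubit gates applied in an arbitrary order to the qubits in its support. Then, for every choice of these orders, the effective distance of $\mathcal{Q}$ is also $d$.
   Context: Vectors in $\mathbb{F}_2^{n}$ are indexed so that the first $n_1n_2$ coordinates correspond to ''bit-type'' qubits (indexed by pairs of a column of $H_1$ and a column of $H_2$) and the last $r_1r_2$ to ''check-type'' qubits (indexed by pairs of a row of $H_1$ and a row of $H_2$). Each row of $H_X$ (resp. $H_Z$) defines an $X$-type (resp. $Z$-type) stabilizer generator acting as $X$ (resp. $Z$) on the qubits where the row is $1$; these commute since $H_XH_Z^T=0$. The distance $d$ is the minimum Hamming weight of a vector in $\big(\ker H_X\setminus \mathrm{Im}\,H_Z^T\big)\cup\big(\ker H_Z\setminus \mathrm{Im}\,H_X^T\big)$ (i.e. of a nontrivial logical $Z$ or $X$ operator), with $d=\infty$ if this set is empty. Fault model: a fault is either (i) a single-qubit Pauli error on a data qubit, or (ii)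 an error on the ancilla during the measurement of one stabilizer generator, which propagates to the data qubits: an ancilla error during the measurement of a $Z$-type (resp. $X$-type) generator with support $S$ produces a $Z$ (resp. $X$) error on a subset of $S$ (the possible subsets depend on the gate order; the analysis allows any subset of $S$). A $Y$ error on an ancilla propagates as either an $X$- or a $Z$-type error, so it is covered by (ii). The resulting data-qubit error is the product of the errors produced by all faults. The effective distance (for the given code and measurement circuits) is the minimum number of faults whose resulting data-qubit error is an undetectable logical error, i.e. its $X$-part lies in $\ker H_Z\setminus\mathrm{Im}\,H_X^T$ or its $Z$-part lies in $\ker H_X\setminus\mathrm{Im}\,H_Z^T$, while it commutes with all stabilizers. *)

From mathcomp Require Import all_boot all_algebra.
Set Implicit Arguments. Unset Strict Implicit. Unset Printing Implicit Defensive.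
Import GRing.Theory.
Local Open Scope ring_scope.

(* Qubits of the hypergraph product code: "bit-type" qubits indexed by a pair
   (column of H1, column of H2), then "check-type" qubits indexed by a pair
   (row of H1, row of H2).  n = n1*n2 + r1*r2. *)
Definition hqubit (r1 n1 r2 n2 : nat) : finType :=
  (('I_n1 * 'I_n2) + ('I_r1 * 'I_r2))%type.

(* X checks: rows of H_X = (H1 (x) I_n2 | I_r1 (x) H2^T), indexed by ('I_r1 * 'I_n2). *)
Definition hxgen (r1 n1 r2 n2 : nat) : finType := ('I_r1 * 'I_n2)%type.
(* Z checks: rows of H_Z = (I_n1 (x) H2 | H1^T (x) I_r2), indexed by ('I_n1 * 'I_r2). *)
Definition hzgen (r1 n1 r2 n2 : nat) : finType := ('I_n1 * 'I_r2)%type.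

Definition HX r1 n1 r2 n2 (H1 : 'M['F_2]_(r1, n1)) (H2 : 'M['F_2]_(r2, n2))
  (c : hxgen r1 n1 r2 n2) (q : hqubit r1 n1 r2 n2) : 'F_2 :=
  match q with
  | inl (a, b) => H1 c.1 a * (c.2 == b)%:R
  | inr (a, b) => (c.1 == a)%:R * H2 b c.2
  end.

Definition HZ r1 n1 r2 n2 (H1 : 'M['F_2]_(r1, n1)) (H2 : 'M['F_2]_(r2, n2))
  (c : hzgen r1 n1 r2 n2) (q : hqubit r1 n1 r2 n2) : 'F_2 :=
  match q with
  | inl (a, b) => (c.1 == a)%:R * H2 c.2 b
  | inr (a, b) => H1 a c.1 * (c.2 == b)%:R
  end.

Definition in_ker (C Q : finType) (H : C -> Q -> 'F_2) (v : {ffun Q -> 'F_2}) : Prop :=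
  forall c, \sum_q H c q * v q = 0.

Definition in_imT (C Q : finType) (H : C -> Q -> 'F_2) (v : {ffun Q -> 'F_2}) : Prop :=
  exists u : {ffun C -> 'F_2}, forall q, v q = \sum_c u c * H c q.

Definition weight (Q : finType) (v : {ffun Q -> 'F_2}) : nat := #|[set q | v q != 0]|.

Definition nontrivial_logical (CX CZ Q : finType)
  (hx : CX -> Q -> 'F_2) (hz : CZ -> Q -> 'F_2) (v : {ffun Q -> 'F_2}) : Prop :=
  (in_ker hx v /\ ~ in_imT hz v) \/ (in_ker hz v /\ ~ in_imT hx v).

(* "d is the minimum of the nat-set P", with d = None meaning infinity (P empty). *)
Definition is_min_nat (P : nat -> Prop) (d : option nat) : Prop :=
  match d with
  | Some m => P m /\ (forall k, P k -> (m <= k)%N)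
  | None => forall k, ~ P k
  end.

Definition code_distance (CX CZ Q : finType)
  (hx : CX -> Q -> 'F_2) (hz : CZ -> Q -> 'F_2) (d : option nat) : Prop :=
  is_min_nat (fun k => exists v, nontrivial_logical hx hz v /\ weight v = k) d.

(* Faults (single fault locations):
   DataX/DataY/DataZ q : a single-qubit Pauli X / Y / Z error on data qubit q;
   AncX g T : an ancilla error during the measurement of X-type generator g,
              propagating to an X error on the data qubits of T;
   AncZ g T : same for Z-type generator g, propagating to a Z error on T. *)
Inductive fault (CX CZ Q : finType) :=
  | DataX of Q | DataY of Q | DataZ of Q
  | AncX of CX & {set Q}
  | AncZ of CZ & {set Q}.

Definition indic (Q : finType) (T : {set Q}) : {ffun Q -> 'F_2} :=
  [ffun q => (q \in T)%:R].

Definition fault_error (CX CZ Q : finType) (f : fault CX CZ Q)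
  : {ffun Q -> 'F_2} * {ffun Q -> 'F_2} :=
  match f with
  | DataX q => (indic [set q], 0)
  | DataY q => (indic [set q], indic [set q])
  | DataZ q => (0, indic [set q])
  | AncX _ T => (indic T, 0)
  | AncZ _ T => (0, indic T)
  end.

(* Total error: product of the Paulis = sum of the binary vectors. *)
Definition total_error (CX CZ Q : finType) (fs : seq (fault CX CZ Q))
  : {ffun Q -> 'F_2} * {ffun Q -> 'F_2} :=
  ((\sum_(f <- fs) (fault_error f).1), (\sum_(f <- fs) (fault_error f).2)).

(* Measurement circuit of a generator: the order in which its two-qubit gates
   (one per support qubit, with its own ancilla) touch the qubits of its
   support.  Following the fault model of the paper, an ancilla fault during
   the measurement of generator c with support S may propagate to an error on
   ANY subset of S (the subsets actually reachable for a given gate order are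
   among these; the analysis allows any subset). *)
Definition valid_order (C Q : finType) (H : C -> Q -> 'F_2) (ord : C -> seq Q) : Prop :=
  forall c, uniq (ord c) /\ (forall q, (q \in ord c) = (H c q != 0)).

Definition hook_set (C Q : finType) (ord : C -> seq Q) (c : C) (T : {set Q}) : Prop :=
  forall q, q \in T -> q \in ord c.

Definition admissible_fault (CX CZ Q : finType)
  (ordX : CX -> seq Q) (ordZ : CZ -> seq Q) (f : fault CX CZ Q) : Prop :=
  match f with
  | AncX g T => hook_set ordX g T
  | AncZ g T => hook_set ordZ g T
  | _ => True
  end.

Fixpoint all_admissible (CX CZ Q : finType)
  (ordX : CX -> seq Q) (ordZ : CZ -> seq Q) (fs : seq (fault CX CZ Q)) : Prop :=
  match fs with
  | [::] => True
  | f :: fs' => admissible_fault ordX ordZ f /\ all_admissible ordX ordZ fs'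
  end.

Definition undetectable_logical (CX CZ Q : finType)
  (hx : CX -> Q -> 'F_2) (hz : CZ -> Q -> 'F_2)
  (e : {ffun Q -> 'F_2} * {ffun Q -> 'F_2}) : Prop :=
  in_ker hz e.1 /\ in_ker hx e.2 /\ (~ in_imT hx e.1 \/ ~ in_imT hz e.2).

Definition effective_distance (CX CZ Q : finType)
  (hx : CX -> Q -> 'F_2) (hz : CZ -> Q -> 'F_2)
  (ordX : CX -> seq Q) (ordZ : CZ -> seq Q) (d : option nat) : Prop :=
  is_min_nat (fun k => exists fs : seq (fault CX CZ Q),
                 size fs = k /\ all_admissible ordX ordZ fs /\
                 undetectable_logical hx hz (total_error fs)) d.

(* A Z error e with H_X e = 0 has a bit part E_b (n1 x n2) and a check part E_c
   (r1 x r2) with H1 E_b = E_c H2.  Exactness of the hypergraph-product complex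
   says that e is a Z stabilizer unless E_b y <> 0 for some y in ker H2, or
   z E_c <> 0 for some z in the left kernel of H1.  In the first case
   x = E_b y lies in ker H1, and x (x) e_b is a Z logical (it meets the X logical
   e_a (x) y oddly) of weight |x|, which is at most the number of nonzero rows of
   E_b; the second case is the same on check qubits with columns of E_c.  A Z
   check meets the bit qubits in a single row and the check qubits in a single
   column, so each fault -- a one-qubit error or a hook error inside one check --
   touches at most one such row or column: a logical error made of k faults
   yields a nontrivial logical of weight at most k.  X errors are symmetric, and
   conversely a logical of weight w is produced by w data-qubit faults. *)

From mathcomp Require Import all_boot all_algebra.
Set Implicit Arguments. Unset Strict Implicit. Unset Printing Implicit Defensive.
Import GRing.Theory.
Local Open Scope ring_scope.

Lemma sum_single (V : nmodType) (I : finType) (i0 : I) (F : I -> V) :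
  (forall i, i != i0 -> F i = 0) -> \sum_i F i = F i0.
Proof. by move=> F0; rewrite (bigD1 i0) //= big1 ?addr0. Qed.
Arguments sum_single {V I} i0 {F}.

Lemma sum_pair (V : nmodType) (I J : finType) (F : I * J -> V) :
  \sum_p F p = \sum_i \sum_j F (i, j).
Proof. by rewrite pair_bigA; apply: eq_bigr => -[]. Qed.

Lemma F2_natr_neq0 (b : bool) : (b%:R != 0 :> 'F_2) = b.
Proof. by case: b. Qed.

Lemma F2_neq0_eq1 (x : 'F_2) : x != 0 -> x = 1.
Proof. by case: x => [[|[|n]] lt_n2] //= _; apply: val_inj. Qed.

Lemma F2_addr_eq0 (x y : 'F_2) : (x + y == 0) = (x == y).
Proof. by rewrite addr_eq0 oppr_pchar2 // pchar_Fp. Qed.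

Lemma is_min_nat_transfer (P P' : nat -> Prop) (d : option nat) :
  (forall k, P k -> exists2 k', P' k' & (k' <= k)%N) ->
  (forall k, P' k -> P k) ->
  is_min_nat P' d -> is_min_nat P d.
Proof.
move=> down up; case: d => [m [P'm minm] | noP'] /=.
  by split=> [|k /down[k' /minm]]; [exact: up | exact: leq_trans].
by move=> k /down[k' /noP'].
Qed.

Section KernelDuality.
Variable F : fieldType.

Lemma submx_of_ker_sub r m n (A : 'M[F]_(r, n)) (B : 'M[F]_(m, n)) :
  (forall y : 'cV_n, A *m y = 0 -> B *m y = 0) -> (B <= A)%MS.
Proof.
move=> kerAB; rewrite submxE; apply/eqP/matrixP => i j.
have := kerAB (cokermx A *m delta_mx j 0).
rewrite mulmxA mulmx_coker mul0mx mulmxA -colE => /(_ erefl) /matrixP/(_ i 0).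
by rewrite !mxE.
Qed.

Lemma hp_cycle_boundary r1 n1 r2 n2 (H1 : 'M[F]_(r1, n1)) (H2 : 'M[F]_(r2, n2))
    (Eb : 'M[F]_(n1, n2)) (Ec : 'M[F]_(r1, r2)) :
  H1 *m Eb = Ec *m H2 ->
  (forall y : 'cV_n2, H2 *m y = 0 -> Eb *m y = 0) ->
  (forall z : 'rV_r1, z *m H1 = 0 -> z *m Ec = 0) ->
  exists A : 'M_(n1, r2), Eb = A *m H2 /\ Ec = H1 *m A.
Proof.
move=> cycle kerEb cokerEc.
have /submxP [A0 EA0] := submx_of_ker_sub kerEb.
have /submxP [C EC] : (Ec^T <= H1^T)%MS.
  apply: submx_of_ker_sub => y /(congr1 trmx).
  rewrite trmx_mul trmxK trmx0 => /cokerEc /(congr1 trmx).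
  by rewrite trmx_mul trmxK trmx0.
have {}EC : Ec = H1 *m C^T by rewrite -[Ec]trmxK EC trmx_mul trmxK.
set M := C^T - A0.
have HMH : H1 *m M *m H2 = 0.
  by rewrite mulmxBr mulmxBl -EC -mulmxA -EA0 cycle subrr.
(* Project the columns of M onto ker H1; this does not change M *m H2, whose
   columns already lie in ker H1. *)
have [T TH2 H1T] : exists2 T : 'M_(n1, r2), T *m H2 = M *m H2 & H1 *m T = 0.
  have HMK : (H2^T *m M^T <= kermx H1^T)%MS.
    by apply/sub_kermxP; rewrite -!trmx_mul mulmxA HMH trmx0.
  exists (M^T *m pinvmx (kermx H1^T) *m kermx H1^T)^T.
    apply: trmx_inj; rewrite [LHS]trmx_mul [RHS]trmx_mul trmxK.
    by rewrite (mulmxA H2^T) (mulmxA H2^T) mulmxKpV.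
  apply: trmx_inj; rewrite [LHS]trmx_mul trmxK.
  by rewrite -(mulmxA _ (kermx _)) mulmx_ker mulmx0 trmx0.
exists (A0 + M - T); split.
  by rewrite mulmxBl mulmxDl -EA0 TH2 addrK.
by rewrite mulmxBr mulmxDr H1T subr0 mulmxBr addrC subrK.
Qed.

End KernelDuality.

Section NonzeroRows.
Variable R : nzRingType.

Definition nzrows m n (A : 'M[R]_(m, n)) : {set 'I_m} := [set i | row i A != 0].

Lemma nzrowsD m n (A B : 'M[R]_(m, n)) :
  nzrows (A + B) \subset nzrows A :|: nzrows B.
Proof.
apply/subsetP => i; rewrite !inE linearD /=.
by apply: contraR; rewrite negb_or !negbK => /andP[/eqP-> /eqP->]; rewrite addr0.
Qed.

Lemma card_nzrows_sum I (r : seq I) m n (A : I -> 'M[R]_(m, n)) :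
  (#|nzrows (\sum_(i <- r) A i)| <= \sum_(i <- r) #|nzrows (A i)|)%N.
Proof.
elim: r => [|i r IH]; rewrite ?big_nil ?big_cons.
  by rewrite leqn0 cards_eq0; apply/eqP/setP => k; rewrite !inE row0 eqxx.
rewrite (leq_trans (subset_leq_card (nzrowsD _ _))) //.
by rewrite (leq_trans (leq_card_setU _ _)) // leq_add2l.
Qed.

Lemma nzrows_mulmx m n p (A : 'M[R]_(m, n)) (B : 'M[R]_(n, p)) :
  nzrows (A *m B) \subset nzrows A.
Proof.
by apply/subsetP => i; rewrite !inE row_mul; apply: contra => /eqP->; rewrite mul0mx.
Qed.

Lemma mem_nzrows m n (A : 'M[R]_(m, n)) i :
  reflect (exists j, A i j != 0) (i \in nzrows A).
Proof.
rewrite inE; apply: (iffP idP) => [nzA | [j]]; last first.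
  by apply: contraNN => /eqP/matrixP/(_ 0 j); rewrite !mxE => ->.
apply/existsP; apply: contraNT nzA; rewrite negb_exists => /forallP zA.
apply/eqP/matrixP => k j; rewrite (ord1 k) !mxE.
by have := zA j; rewrite negbK => /eqP.
Qed.

Lemma nzrows_eq0 m n (A : 'M[R]_(m, n)) : (nzrows A == set0) = (A == 0).
Proof.
apply/eqP/eqP => [nzA0 | ->]; last by apply/setP => i; rewrite !inE row0 eqxx.
apply/row_matrixP => i; rewrite row0; apply/eqP.
by have := in_set0 i; rewrite -nzA0 inE => /negbFE.
Qed.

Lemma nzrows_witness m n (A : 'M[R]_(m, n)) : A != 0 -> exists i, i \in nzrows A.
Proof. by rewrite -nzrows_eq0 => /set0Pn. Qed.

Lemma mem_nzrows_col m (u : 'cV[R]_m) i : (i \in nzrows u) = (u i 0 != 0).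
Proof.
by apply/mem_nzrows/idP => [[j]|]; [rewrite (ord1 j) | exists 0].
Qed.

Lemma card_nzrows_le1 m n (A : 'M[R]_(m, n)) :
  (forall i i' j j', A i j != 0 -> A i' j' != 0 -> i = i') -> (#|nzrows A| <= 1)%N.
Proof.
move=> one_row; apply/card_le1_eqP => i i' /mem_nzrows[j Aij] /mem_nzrows[j' Aij'].
by rewrite (one_row _ _ _ _ Aij Aij').
Qed.

Lemma nzrows_delta m (i : 'I_m) : nzrows (delta_mx i 0 : 'cV[R]_m) = [set i].
Proof.
apply/setP => k; rewrite in_set1; apply/mem_nzrows/eqP => [[j]|->].
  by rewrite mxE; case: (k =P i) => //=; rewrite eqxx.
by exists 0; rewrite mxE !eqxx oner_eq0.
Qed.

End NonzeroRows.

Definition mx_support (R : nzRingType) m n (A : 'M[R]_(m, n)) : {set 'I_m * 'I_n} :=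
  [set p | A p.1 p.2 != 0].

Lemma card_mx_support_outer (R : idomainType) m n (u : 'cV[R]_m) (v : 'rV[R]_n) :
  #|mx_support (u *m v)| = (#|nzrows u| * #|nzrows v^T|)%N.
Proof.
rewrite -cardsX; apply: eq_card => -[i j].
by rewrite in_setX !mem_nzrows_col inE /= mxE big_ord1 mulf_eq0 negb_or [v^T _ _]mxE.
Qed.

Lemma sum_outer_delta (R : nzRingType) m n (u : 'cV[R]_m) (w : 'rV[R]_n) a b :
  \sum_p (u *m delta_mx 0 b) p.1 p.2 * (delta_mx a 0 *m w) p.1 p.2 = u a 0 * w 0 b.
Proof.
rewrite (sum_single (a, b)) => [|[i j]]; rewrite !mxE !big_ord1 !mxE !eqxx /=.
  by rewrite mulr1 mul1r.
rewrite xpair_eqE negb_and andbT => /orP[]/negbTE->;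
  by rewrite /= mulr0n !(mul0r, mulr0).
Qed.

Section CSSCode.
Variables (CX CZ Q : finType).
Implicit Types (hx : CX -> Q -> 'F_2) (hz : CZ -> Q -> 'F_2) (v : {ffun Q -> 'F_2}).

Definition qdot (u v : {ffun Q -> 'F_2}) : 'F_2 := \sum_q u q * v q.

Lemma qdotC (u v : {ffun Q -> 'F_2}) : qdot u v = qdot v u.
Proof. by apply: eq_bigr => q _; rewrite mulrC. Qed.

Lemma not_in_imT_qdot (C : finType) (h : C -> Q -> 'F_2) (v l : {ffun Q -> 'F_2}) :
  in_ker h l -> qdot v l != 0 -> ~ in_imT h v.
Proof.
move=> hl + [u hu]; rewrite /qdot.
under eq_bigr do rewrite hu mulr_suml.
rewrite exchange_big big1 ?eqxx // => c _.
by under eq_bigr do rewrite -mulrA; rewrite -mulr_sumr hl mulr0.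
Qed.

Lemma in_ker0 (C : finType) (h : C -> Q -> 'F_2) : in_ker h 0.
Proof. by move=> c; apply: big1 => q _; rewrite ffunE mulr0. Qed.

Definition check_local (C : finType) (h : C -> Q -> 'F_2) (e : {ffun Q -> 'F_2}) :=
  forall q q', e q != 0 -> e q' != 0 -> q = q' \/ exists g, (h g q != 0) && (h g q' != 0).

Lemma indic_neq0 (T : {set Q}) q : (indic T q != 0) = (q \in T).
Proof. by rewrite ffunE; case: (q \in T). Qed.

Section Faults.
Variables (ordX : CX -> seq Q) (ordZ : CZ -> seq Q).

Lemma check_local0 (C : finType) (h : C -> Q -> 'F_2) : check_local h 0.
Proof. by move=> q q'; rewrite ffunE eqxx. Qed.

Lemma check_local_indic1 (C : finType) (h : C -> Q -> 'F_2) q0 :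
  check_local h (indic [set q0]).
Proof. by move=> q q'; rewrite !indic_neq0 !inE => /eqP-> /eqP->; left. Qed.

Lemma check_local_hook (C : finType) (h : C -> Q -> 'F_2) ord g T :
  valid_order h ord -> hook_set ord g T -> check_local h (indic T).
Proof.
move=> /(_ g)[_ ord_supp] hook q q'; rewrite !indic_neq0 => /hook Tq /hook Tq'.
by right; exists g; rewrite -!ord_supp Tq Tq'.
Qed.

Lemma fault_errorX_check_local hx f :
  valid_order hx ordX -> admissible_fault ordX ordZ f -> check_local hx (fault_error f).1.
Proof.
move=> vo; case: f => [q|q|q|g T|g T] /= hook;
  by [exact: check_local_indic1 | exact: check_local0 | exact: check_local_hook vo hook].
Qed.

Lemma fault_errorZ_check_local hz f :
  valid_order hz ordZ -> admissible_fault ordX ordZ f -> check_local hz (fault_error f).2.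
Proof.
move=> vo; case: f => [q|q|q|g T|g T] /= hook;
  by [exact: check_local_indic1 | exact: check_local0 | exact: check_local_hook vo hook].
Qed.

Lemma sum_admissible_le_size (w : fault CX CZ Q -> nat) fs :
  (forall f, admissible_fault ordX ordZ f -> (w f <= 1)%N) ->
  all_admissible ordX ordZ fs -> (\sum_(f <- fs) w f <= size fs)%N.
Proof.
move=> w_le1; elim: fs => [|f fs IH] /=; first by rewrite big_nil.
by case=> /w_le1 wf /IH; rewrite big_cons -add1n; apply: leq_add.
Qed.

Lemma sum_indic_support v : \sum_(q <- enum [set q | v q != 0]) indic [set q] = v.
Proof.
apply/ffunP => p; rewrite sum_ffunE big_enum /=.
have [vp0|nz_vp] := eqVneq (v p) 0.
  rewrite vp0; apply: big1 => q; rewrite inE ffunE inE.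
  by case: (p =P q) => [<-|//]; rewrite vp0 eqxx.
rewrite (bigD1 p) ?inE //= big1 ?addr0 => [|q /andP[_ nqp]].
  by rewrite ffunE inE eqxx (F2_neq0_eq1 nz_vp).
by rewrite ffunE inE eq_sym (negbTE nqp).
Qed.

Lemma data_faults_logical hx hz v :
  nontrivial_logical hx hz v ->
  exists fs, [/\ size fs = weight v, all_admissible ordX ordZ fs
                 & undetectable_logical hx hz (total_error fs)].
Proof.
have all_data (mk : Q -> fault CX CZ Q) s :
    (forall q, admissible_fault ordX ordZ (mk q)) -> all_admissible ordX ordZ (map mk s).
  by move=> adm; elim: s => //= q s ->; split.
have size_data (mk : Q -> fault CX CZ Q) :
    size (map mk (enum [set q | v q != 0])) = weight v by rewrite size_map -cardE.
case=> [[kerX nimZ] | [kerZ nimX]].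
  exists (map (@DataZ CX CZ Q) (enum [set q | v q != 0])).
  split; [exact: size_data | exact: all_data |].
  rewrite /undetectable_logical /total_error !big_map /= sum_indic_support big1 //.
  by split; [exact: in_ker0 | split; [|right]].
exists (map (@DataX CX CZ Q) (enum [set q | v q != 0])).
split; [exact: size_data | exact: all_data |].
rewrite /undetectable_logical /total_error !big_map /= sum_indic_support big1 //.
by split=> //; split; [exact: in_ker0 | left].
Qed.

Lemma card_nzrows_faults m n (M : fault CX CZ Q -> 'M['F_2]_(m, n)) fs :
  (forall f, admissible_fault ordX ordZ f -> (#|nzrows (M f)| <= 1)%N) ->
  all_admissible ordX ordZ fs -> (#|nzrows (\sum_(f <- fs) M f)| <= size fs)%N.
Proof.
move=> M_le1 adm; apply: leq_trans (card_nzrows_sum _ _) _.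
exact: sum_admissible_le_size adm.
Qed.

End Faults.

End CSSCode.

Section HypergraphProduct.
Variables (r1 n1 r2 n2 : nat) (H1 : 'M['F_2]_(r1, n1)) (H2 : 'M['F_2]_(r2, n2)).
Local Notation qvector := {ffun hqubit r1 n1 r2 n2 -> 'F_2}.
Local Notation logical := (nontrivial_logical (HX H1 H2) (HZ H1 H2)).
Implicit Types (e : qvector).

Definition bitmx (e : qvector) : 'M['F_2]_(n1, n2) := \matrix_(a, b) e (inl (a, b)).
Definition checkmx (e : qvector) : 'M['F_2]_(r1, r2) := \matrix_(i, j) e (inr (i, j)).
Definition qvec (Mb : 'M['F_2]_(n1, n2)) (Mc : 'M['F_2]_(r1, r2)) : qvector :=
  [ffun q => match q with inl p => Mb p.1 p.2 | inr p => Mc p.1 p.2 end].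

Lemma bitmx_qvec Mb Mc : bitmx (qvec Mb Mc) = Mb.
Proof. by apply/matrixP => a b; rewrite !mxE ffunE. Qed.

Lemma checkmx_qvec Mb Mc : checkmx (qvec Mb Mc) = Mc.
Proof. by apply/matrixP => i j; rewrite !mxE ffunE. Qed.

Lemma bitmx_sum I (r : seq I) (E : I -> qvector) :
  bitmx (\sum_(i <- r) E i) = \sum_(i <- r) bitmx (E i).
Proof.
by apply/matrixP => a b; rewrite summxE !mxE sum_ffunE; apply: eq_bigr => i _; rewrite mxE.
Qed.

Lemma checkmx_sum I (r : seq I) (E : I -> qvector) :
  checkmx (\sum_(i <- r) E i) = \sum_(i <- r) checkmx (E i).
Proof.
by apply/matrixP => a b; rewrite summxE !mxE sum_ffunE; apply: eq_bigr => i _; rewrite mxE.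
Qed.

Lemma sum_hqubit (F : hqubit r1 n1 r2 n2 -> 'F_2) :
  \sum_q F q = \sum_a \sum_b F (inl (a, b)) + \sum_i \sum_j F (inr (i, j)).
Proof. by rewrite big_sumType /= !sum_pair. Qed.

Lemma HX_mulE e c :
  \sum_q HX H1 H2 c q * e q = (H1 *m bitmx e + checkmx e *m H2) c.1 c.2.
Proof.
case: c => i b; rewrite sum_hqubit !mxE /=; congr (_ + _).
  apply: eq_bigr => a _; rewrite (sum_single b) => [|b' nb'].
    by rewrite eqxx mulr1 mxE.
  by rewrite eq_sym (negbTE nb') mulr0 mul0r.
rewrite (sum_single i) => [|i' ni']; last first.
  by apply: big1 => j _; rewrite eq_sym (negbTE ni') !mul0r.
by apply: eq_bigr => j _; rewrite eqxx mul1r mxE mulrC.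
Qed.

Lemma HZ_mulE e c :
  \sum_q HZ H1 H2 c q * e q = (H2 *m (bitmx e)^T + (checkmx e)^T *m H1) c.2 c.1.
Proof.
case: c => a j; rewrite sum_hqubit !mxE /=; congr (_ + _).
  rewrite (sum_single a) => [|a' na']; last first.
    by apply: big1 => b _; rewrite eq_sym (negbTE na') !mul0r.
  by apply: eq_bigr => b _; rewrite eqxx mul1r !mxE.
apply: eq_bigr => i _; rewrite (sum_single j) => [|j' nj'].
  by rewrite eqxx mulr1 !mxE mulrC.
by rewrite eq_sym (negbTE nj') mulr0 mul0r.
Qed.

Lemma in_ker_HX e : in_ker (HX H1 H2) e <-> H1 *m bitmx e = checkmx e *m H2.
Proof.
split=> [kerX | cycle [i b]]; last first.
  by rewrite HX_mulE cycle mxE; apply/eqP; rewrite F2_addr_eq0.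
apply/matrixP => i b; apply/eqP; rewrite -F2_addr_eq0.
by have := kerX (i, b); rewrite HX_mulE mxE => ->.
Qed.

Lemma in_ker_HZ e : in_ker (HZ H1 H2) e <-> H2 *m (bitmx e)^T = (checkmx e)^T *m H1.
Proof.
split=> [kerZ | cycle [a j]]; last first.
  by rewrite HZ_mulE cycle mxE; apply/eqP; rewrite F2_addr_eq0.
apply/matrixP => j a; apply/eqP; rewrite -F2_addr_eq0.
by have := kerZ (a, j); rewrite HZ_mulE mxE => ->.
Qed.

Lemma in_imT_HZ (A : 'M_(n1, r2)) e :
  bitmx e = A *m H2 -> checkmx e = H1 *m A -> in_imT (HZ H1 H2) e.
Proof.
move=> /matrixP Eb /matrixP Ec; exists [ffun c => A c.1 c.2] => -[[a b] | [i j]].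
  have := Eb a b; rewrite !mxE => ->; rewrite sum_pair (sum_single a).
    by apply: eq_bigr => j _; rewrite ffunE /= eqxx mul1r.
  by move=> a' na'; apply: big1 => j _; rewrite /= (negbTE na') mul0r mulr0.
have := Ec i j; rewrite !mxE => ->; rewrite sum_pair; apply: eq_bigr => a _.
rewrite (sum_single j) => [|j' nj']; first by rewrite ffunE /= eqxx mulr1 mulrC.
by rewrite /= (negbTE nj') !mulr0.
Qed.

Lemma in_imT_HX (A : 'M_(n2, r1)) e :
  (bitmx e)^T = A *m H1 -> (checkmx e)^T = H2 *m A -> in_imT (HX H1 H2) e.
Proof.
move=> /matrixP Eb /matrixP Ec; exists [ffun c => A c.2 c.1] => -[[a b] | [i j]].
  have := Eb b a; rewrite !mxE => ->; rewrite sum_pair; apply: eq_bigr => i _.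
  rewrite (sum_single b) => [|b' nb']; first by rewrite ffunE /= eqxx mulr1.
  by rewrite /= (negbTE nb') !mulr0.
have := Ec j i; rewrite !mxE => ->; rewrite sum_pair (sum_single i).
  by apply: eq_bigr => b _; rewrite ffunE /= eqxx mul1r mulrC.
by move=> i' ni'; apply: big1 => b _; rewrite /= (negbTE ni') mul0r mulr0.
Qed.

Lemma weight_qvec_bit Mb : weight (qvec Mb 0) = #|mx_support Mb|.
Proof.
rewrite /weight -[RHS](card_imset _ (@inl_inj _ ('I_r1 * 'I_r2)%type)).
apply: eq_card => -[p | p].
  by rewrite mem_imset ?inE ?ffunE //; exact: inl_inj.
by rewrite !inE ffunE /= mxE eqxx; apply/esym/imsetP => -[].
Qed.

Lemma weight_qvec_check Mc : weight (qvec 0 Mc) = #|mx_support Mc|.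
Proof.
rewrite /weight -[RHS](card_imset _ (@inr_inj ('I_n1 * 'I_n2)%type _)).
apply: eq_card => -[p | p].
  by rewrite !inE ffunE /= mxE eqxx; apply/esym/imsetP => -[].
by rewrite mem_imset ?inE ?ffunE //; exact: inr_inj.
Qed.

Lemma qdot_qvec Mb Mc Nb Nc :
  qdot (qvec Mb Mc) (qvec Nb Nc) =
  \sum_p Mb p.1 p.2 * Nb p.1 p.2 + \sum_p Mc p.1 p.2 * Nc p.1 p.2.
Proof.
by rewrite /qdot big_sumType; congr (_ + _); apply: eq_bigr => p _; rewrite !ffunE.
Qed.

Lemma bit_logicals (u : 'cV_n1) (w : 'cV_n2) :
  H1 *m u = 0 -> H2 *m w = 0 -> u != 0 -> w != 0 ->
  (exists2 v, logical v & weight v = #|nzrows u|) /\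
  (exists2 v, logical v & weight v = #|nzrows w|).
Proof.
move=> H1u H2w /nzrows_witness[a]; rewrite mem_nzrows_col => ua.
move=> /nzrows_witness[b]; rewrite mem_nzrows_col => wb.
set vZ := qvec (u *m delta_mx 0 b) 0; set vX := qvec (delta_mx a 0 *m w^T) 0.
have kerZ : in_ker (HX H1 H2) vZ.
  by apply/in_ker_HX; rewrite bitmx_qvec checkmx_qvec mulmxA H1u !mul0mx.
have kerX : in_ker (HZ H1 H2) vX.
  apply/in_ker_HZ; rewrite bitmx_qvec checkmx_qvec trmx_mul trmxK mulmxA H2w.
  by rewrite !mul0mx trmx0 mul0mx.
have pairing : qdot vZ vX != 0.
  rewrite qdot_qvec sum_outer_delta big1 => [|p _]; last by rewrite mxE mul0r.
  by rewrite addr0 mxE mulf_neq0.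
split; [exists vZ | exists vX].
- by left; split=> //; apply: not_in_imT_qdot kerX pairing.
- by rewrite weight_qvec_bit card_mx_support_outer trmx_delta nzrows_delta cards1 muln1.
- by right; split=> //; apply: not_in_imT_qdot kerZ _; rewrite qdotC.
- by rewrite weight_qvec_bit card_mx_support_outer trmxK nzrows_delta cards1 mul1n.
Qed.

Lemma check_logicals (z1 : 'rV_r1) (z2 : 'rV_r2) :
  z1 *m H1 = 0 -> z2 *m H2 = 0 -> z1 != 0 -> z2 != 0 ->
  (exists2 v, logical v & weight v = #|nzrows z2^T|) /\
  (exists2 v, logical v & weight v = #|nzrows z1^T|).
Proof.
move=> z1H1 z2H2; rewrite -trmx_eq0 => /nzrows_witness[i].
rewrite mem_nzrows_col mxE => z1i; rewrite -trmx_eq0 => /nzrows_witness[j].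
rewrite mem_nzrows_col mxE => z2j.
set vZ := qvec 0 (delta_mx i 0 *m z2); set vX := qvec 0 (z1^T *m delta_mx 0 j).
have kerZ : in_ker (HX H1 H2) vZ.
  by apply/in_ker_HX; rewrite bitmx_qvec checkmx_qvec mulmx0 -mulmxA z2H2 mulmx0.
have kerX : in_ker (HZ H1 H2) vX.
  apply/in_ker_HZ; rewrite bitmx_qvec checkmx_qvec trmx0 mulmx0.
  by rewrite trmx_mul trmxK -mulmxA z1H1 mulmx0.
have pairing : qdot vX vZ != 0.
  rewrite qdot_qvec sum_outer_delta big1 => [|p _]; last by rewrite mxE mul0r.
  by rewrite add0r mxE mulf_neq0.
split; [exists vZ | exists vX].
- by left; split=> //; apply: not_in_imT_qdot kerX _; rewrite qdotC.
- by rewrite weight_qvec_check card_mx_support_outer nzrows_delta cards1 mul1n.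
- by right; split=> //; apply: not_in_imT_qdot kerZ pairing.
- by rewrite weight_qvec_check card_mx_support_outer trmx_delta nzrows_delta cards1 muln1.
Qed.

Lemma check_local_HZ_bitrows e :
  check_local (HZ H1 H2) e -> (#|nzrows (bitmx e)| <= 1)%N.
Proof.
move=> loc; apply: card_nzrows_le1 => a a' b b'; rewrite !mxE => /loc/[apply].
case=> [[-> _] // | [[a0 j]]] /=.
by rewrite !mulf_eq0 !negb_or !F2_natr_neq0 => /andP[/andP[/eqP<- _] /andP[/eqP<- _]].
Qed.

Lemma check_local_HZ_checkcols e :
  check_local (HZ H1 H2) e -> (#|nzrows (checkmx e)^T| <= 1)%N.
Proof.
move=> loc; apply: card_nzrows_le1 => j j' i i'; rewrite !mxE => /loc/[apply].
case=> [[_ ->] // | [[a j0]]] /=.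
by rewrite !mulf_eq0 !negb_or !F2_natr_neq0 => /andP[/andP[_ /eqP<-] /andP[_ /eqP<-]].
Qed.

Lemma check_local_HX_bitcols e :
  check_local (HX H1 H2) e -> (#|nzrows (bitmx e)^T| <= 1)%N.
Proof.
move=> loc; apply: card_nzrows_le1 => b b' a a'; rewrite !mxE => /loc/[apply].
case=> [[_ ->] // | [[i b0]]] /=.
by rewrite !mulf_eq0 !negb_or !F2_natr_neq0 => /andP[/andP[_ /eqP<-] /andP[_ /eqP<-]].
Qed.

Lemma check_local_HX_checkrows e :
  check_local (HX H1 H2) e -> (#|nzrows (checkmx e)| <= 1)%N.
Proof.
move=> loc; apply: card_nzrows_le1 => i i' j j'; rewrite !mxE => /loc/[apply].
case=> [[-> _] // | [[i0 b]]] /=.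
by rewrite !mulf_eq0 !negb_or !F2_natr_neq0 => /andP[/andP[/eqP<- _] /andP[/eqP<- _]].
Qed.

Section LowerBound.
Variables (ordX : hxgen r1 n1 r2 n2 -> seq (hqubit r1 n1 r2 n2))
          (ordZ : hzgen r1 n1 r2 n2 -> seq (hqubit r1 n1 r2 n2))
          (fs : seq (fault (hxgen r1 n1 r2 n2) (hzgen r1 n1 r2 n2) (hqubit r1 n1 r2 n2))).
Hypothesis adm : all_admissible ordX ordZ fs.

Lemma hp_Zerror_logical_le : valid_order (HZ H1 H2) ordZ ->
  in_ker (HX H1 H2) (total_error fs).2 -> ~ in_imT (HZ H1 H2) (total_error fs).2 ->
  exists2 v, logical v & (weight v <= size fs)%N.
Proof.
move=> voZ; set e := (total_error fs).2; move/in_ker_HX => cycle not_bd.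
have local f : admissible_fault ordX ordZ f -> check_local (HZ H1 H2) (fault_error f).2.
  exact: fault_errorZ_check_local.
have bits_le : (#|nzrows (bitmx e)| <= size fs)%N.
  rewrite bitmx_sum; apply: card_nzrows_faults adm => f /local.
  exact: check_local_HZ_bitrows.
have checks_le : (#|nzrows (checkmx e)^T| <= size fs)%N.
  rewrite checkmx_sum linear_sum; apply: card_nzrows_faults adm => f /local.
  exact: check_local_HZ_checkcols.
have [/existsP[y /andP[/eqP H2y nz]] | no_y] :=
  boolP [exists y : 'cV_n2, (H2 *m y == 0) && (bitmx e *m y != 0)].
  have H1u : H1 *m (bitmx e *m y) = 0 by rewrite mulmxA cycle -mulmxA H2y mulmx0.
  have nz_y : y != 0 by apply: contraNneq nz => ->; rewrite mulmx0.
  have [[v lv wv] _] := bit_logicals H1u H2y nz nz_y.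
  exists v; rewrite // wv.
  exact: leq_trans (subset_leq_card (nzrows_mulmx _ _)) bits_le.
have [/existsP[z /andP[/eqP zH1 nz]] | no_z] :=
  boolP [exists z : 'rV_r1, (z *m H1 == 0) && (z *m checkmx e != 0)].
  have wH2 : z *m checkmx e *m H2 = 0 by rewrite -mulmxA -cycle mulmxA zH1 mul0mx.
  have nz_z : z != 0 by apply: contraNneq nz => ->; rewrite mul0mx.
  have [[v lv wv] _] := check_logicals zH1 wH2 nz_z nz.
  exists v; rewrite // wv trmx_mul.
  exact: leq_trans (subset_leq_card (nzrows_mulmx _ _)) checks_le.
case: not_bd; have [|z zH1|A [Eb Ec]] := hp_cycle_boundary cycle.
- move=> y H2y; apply/eqP; apply: contraNT no_y => nz.
  by apply/existsP; exists y; rewrite H2y eqxx.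
- apply/eqP; apply: contraNT no_z => nz.
  by apply/existsP; exists z; rewrite zH1 eqxx.
- exact: in_imT_HZ Eb Ec.
Qed.

Lemma hp_Xerror_logical_le : valid_order (HX H1 H2) ordX ->
  in_ker (HZ H1 H2) (total_error fs).1 -> ~ in_imT (HX H1 H2) (total_error fs).1 ->
  exists2 v, logical v & (weight v <= size fs)%N.
Proof.
move=> voX; set e := (total_error fs).1; move/in_ker_HZ => cycle not_bd.
have local f : admissible_fault ordX ordZ f -> check_local (HX H1 H2) (fault_error f).1.
  exact: fault_errorX_check_local.
have bits_le : (#|nzrows (bitmx e)^T| <= size fs)%N.
  rewrite bitmx_sum linear_sum; apply: card_nzrows_faults adm => f /local.
  exact: check_local_HX_bitcols.
have checks_le : (#|nzrows (checkmx e)| <= size fs)%N.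
  rewrite checkmx_sum; apply: card_nzrows_faults adm => f /local.
  exact: check_local_HX_checkrows.
have [/existsP[y /andP[/eqP H1y nz]] | no_y] :=
  boolP [exists y : 'cV_n1, (H1 *m y == 0) && ((bitmx e)^T *m y != 0)].
  have H2w : H2 *m ((bitmx e)^T *m y) = 0 by rewrite mulmxA cycle -mulmxA H1y mulmx0.
  have nz_y : y != 0 by apply: contraNneq nz => ->; rewrite mulmx0.
  have [_ [v lv wv]] := bit_logicals H1y H2w nz_y nz.
  exists v; rewrite // wv.
  exact: leq_trans (subset_leq_card (nzrows_mulmx _ _)) bits_le.
have [/existsP[z /andP[/eqP zH2 nz]] | no_z] :=
  boolP [exists z : 'rV_r2, (z *m H2 == 0) && (z *m (checkmx e)^T != 0)].
  have wH1 : z *m (checkmx e)^T *m H1 = 0 by rewrite -mulmxA -cycle mulmxA zH2 mul0mx.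
  have nz_z : z != 0 by apply: contraNneq nz => ->; rewrite mul0mx.
  have [_ [v lv wv]] := check_logicals wH1 zH2 nz nz_z.
  exists v; rewrite // wv trmx_mul trmxK.
  exact: leq_trans (subset_leq_card (nzrows_mulmx _ _)) checks_le.
case: not_bd; have [|z zH2|A [Eb Ec]] := hp_cycle_boundary cycle.
- move=> y H1y; apply/eqP; apply: contraNT no_y => nz.
  by apply/existsP; exists y; rewrite H1y eqxx.
- apply/eqP; apply: contraNT no_z => nz.
  by apply/existsP; exists z; rewrite zH2 eqxx.
- exact: in_imT_HX Eb Ec.
Qed.

Lemma hp_undetectable_logical_le :
  valid_order (HX H1 H2) ordX -> valid_order (HZ H1 H2) ordZ ->
  undetectable_logical (HX H1 H2) (HZ H1 H2) (total_error fs) ->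
  exists2 v, logical v & (weight v <= size fs)%N.
Proof.
move=> voX voZ [kerZ [kerX [not_bdX | not_bdZ]]].
  exact: hp_Xerror_logical_le.
exact: hp_Zerror_logical_le.
Qed.

End LowerBound.

End HypergraphProduct.

Theorem theorem2 (r1 n1 r2 n2 : nat)
  (H1 : 'M['F_2]_(r1, n1)) (H2 : 'M['F_2]_(r2, n2))
  (d : option nat) :
  code_distance (HX H1 H2) (HZ H1 H2) d ->
  forall (ordX : hxgen r1 n1 r2 n2 -> seq (hqubit r1 n1 r2 n2))
         (ordZ : hzgen r1 n1 r2 n2 -> seq (hqubit r1 n1 r2 n2)),
    valid_order (HX H1 H2) ordX ->
    valid_order (HZ H1 H2) ordZ ->
    effective_distance (HX H1 H2) (HZ H1 H2) ordX ordZ d.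
Proof.
move=> dist ordX ordZ voX voZ; apply: is_min_nat_transfer dist.
  move=> _ [fs [<- [adm undetected]]].
  have [v lv wv] := hp_undetectable_logical_le adm voX voZ undetected.
  by exists (weight v) => //; exists v.
move=> _ [v [lv <-]].
have [fs [size_fs adm undetected]] := data_faults_logical ordX ordZ lv.
by exists fs.
Qed.
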